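(* Let $n\ge 1$ and let $J\subseteq[n]$ be a $k$-element subset. Let $\pi,\hat\pi\in S_J$. Then the points $(\pi(1),\dots,\pi(n))$ and $(\hat\pi(1),\dots,\hat\pi(n))$ are joined by an edge of the bridge polytope $\mathrm{Br}_J$ if and only if there exist $i<\ell$ in $[n]$ such that $\hat\pi=(i\,\ell)\pi$ and $\pi(j)=\hat\pi(j)=j$ for every $j$ with $i<j<\ell$. In other words, $\pi$ and $\hat\pi$ differ by swapping the values $i$ and $\ell$, and each of $i+1,\dots,\ell-1$ is a fixed point of both $\pi$ and $\hat\pi$.
   Context: For $J\subseteq[n]=\{1,\dots,n\}$, let $S_J=\{\pi\in S_n:\ \pi(j)\ge j \text{ for all } j\in J,\ \pi(j)\le j \text{ for all } j\notin J\}$. The bridge polytope is $\mathrm{Br}_J=\operatorname{conv}\{(\pi(1),\dots,\pi(n)) : \pi\in S_J\}\subset\mathbb{R}^n$; each $\pi\in S_J$ is identified with the point $(\pi(1),\dots,\pi(n))$, and these points are the vertices of $\mathrm{Br}_J$. For a transposition $(i\,\ell)$ and $\pi\in S_n$, $(i\,\ell)\pi$ denotes the composition $(i\,\ell)\circ\pi$, i.e. the permutation obtained from $\pi$ by swapping the values $i$ and $\ell$. *)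

From HB Require Import structures.
From mathcomp Require Import all_boot all_order all_algebra all_fingroup.
Set Implicit Arguments. Unset Strict Implicit. Unset Printing Implicit Defensive.
Import Order.TTheory GRing.Theory Num.Theory.

(* Convention: [n] = {1,...,n} is represented by 'I_n = {0,...,n-1};
   the element j : 'I_n stands for j+1.  Permutations of [n] are 'S_n. *)

(* S_J : pi(j) >= j for j in J, pi(j) <= j for j not in J
   (invariant under the shift by 1). *)
Definition S_J (n : nat) (J : {set 'I_n}) : pred 'S_n :=
  fun p => [forall j : 'I_n, if j \in J then (val j <= val (p j))%N
                                  else (val (p j) <= val j)%N].

Definition perm_point (R : realFieldType) (n : nat) (p : 'S_n) : 'I_n -> R :=
  fun j => (((val (p j)).+1)%:R)%R.

Definition lin_eval (R : realFieldType) (n : nat) (c x : 'I_n -> R) : R :=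
  (\sum_(j < n) c j * x j)%R.

(* Two vertices u = pt p, v = pt q of P = conv { pt w | w in V } are joined
   by an edge of P iff they are distinct and some linear functional c
   attains its maximum over P exactly on the segment [u,v], i.e. the set of
   vertices maximizing c is exactly {u, v} (the face cut out by c is then
   conv{u,v}, a 1-dimensional face). *)
Definition conv_edge (R : realFieldType) (n : nat) (V : pred 'S_n)
    (pt : 'S_n -> 'I_n -> R) (p q : 'S_n) : Prop :=
  [/\ V p, V q, pt p <> pt q &
   exists c : 'I_n -> R,
     forall w, V w ->
       (lin_eval c (pt w) <= lin_eval c (pt p))%R /\
       (lin_eval c (pt w) = lin_eval c (pt p) <-> (pt w = pt p \/ pt w = pt q))].

Definition bridge_edge (R : realFieldType) (n : nat) (J : {set 'I_n})
    (p q : 'S_n) : Prop :=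
  conv_edge (S_J J) (@perm_point R n) p q.

From HB Require Import structures.
From mathcomp Require Import all_boot all_order all_algebra all_fingroup.
From mathcomp Require Import zify ring lra.
Set Implicit Arguments. Unset Strict Implicit. Unset Printing Implicit Defensive.
Import Order.TTheory GRing.Theory Num.Theory.

(* An edge of [Br_J] joining the vertices of [p] and [q] is cut out by a linear
   functional [c] maximised over [S_J] exactly at [p] and [q].  If two values
   [a < b] of a maximiser [w] are separated only by fixed points of [w],
   exchanging them stays in [S_J] (barring a fixed endpoint on the wrong side
   of [J]) and changes the score by [(c (w^-1 a) - c (w^-1 b)) (b - a)]; so
   unless the exchange produces the other maximiser, [c (w^-1 a) < c (w^-1 b)].
   Chaining such exchanges from the smallest value where [p] and [q] differ
   gives positions [x], [y] with [c x < c y] (through [p]) and [c y < c x]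
   (through [q]).
   Conversely, if [q = (i l) p] and both fix [i+1..l-1], take [c = p + q - M g]
   where [g] is [1] on [J] and [-1] off [J] inside [i+1..l-1], and [0]
   elsewhere.  Since all vertices lie on one sphere, the defect of [c] at [w]
   is [sum_j (w_j - p_j) (w_j - q_j) + M sum_j g_j (w_j - p_j)]: the second
   sum is a positive integer unless [w] fixes [i+1..l-1], and then the first
   one is nonnegative and vanishes only at [p] and [q].  For [M] larger than
   [|q - p|^2] the defect is therefore positive at every other vertex. *)

Section Bridge.

Variables (n : nat) (J : {set 'I_n}).

Lemma S_J_leq_in (w : 'S_n) j : S_J J w -> j \in J -> (j <= w j)%N.
Proof. by move=> /forallP/(_ j); case: ifP. Qed.

Lemma S_J_geq_notin (w : 'S_n) j : S_J J w -> j \notin J -> (w j <= j)%N.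
Proof. by move=> /forallP/(_ j); case: ifP => // ->. Qed.

Definition fixes_between (w : 'S_n) (a b : 'I_n) :=
  forall v : 'I_n, (a < v < b)%N -> w v = v.

Definition lo_swappable (w : 'S_n) (a : 'I_n) := (w a != a) || (a \in J).
Definition hi_swappable (w : 'S_n) (b : 'I_n) := (w b != b) || (b \notin J).

(* A position holding [a] or [b] that is not fixed lies outside ]a, b[,
   hence beyond the other endpoint. *)
Lemma S_J_mul_tperm (w : 'S_n) (a b : 'I_n) :
  S_J J w -> (a < b)%N -> fixes_between w a b ->
  lo_swappable w a -> hi_swappable w b -> S_J J (w * tperm a b)%g.
Proof.
move=> Jw ab fixw loa hib; apply/forallP => j /=; rewrite permM.
have outside u : w u != u -> ~~ (a < u < b)%N.
  by apply: contra => /fixw ->; rewrite eqxx.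
case: tpermP => [wja|wjb|_ _]; last exact: (forallP Jw j).
- case: ifP => jJ; first by have := S_J_leq_in Jw jJ; rewrite wja; lia.
  have := S_J_geq_notin Jw (negbT jJ); rewrite wja => aj.
  have wj : w j != j.
    apply: contraTneq loa => wjj; have ja : j = a by rewrite -wja wjj.
    by rewrite /lo_swappable -ja wjj eqxx jJ.
  by move: (outside j wj); rewrite -val_eqE wja /= in wj *; lia.
- case: ifP => jJ; last by
    have := S_J_geq_notin Jw (negbT jJ); rewrite wjb; lia.
  have := S_J_leq_in Jw jJ; rewrite wjb => jb.
  have wj : w j != j.
    apply: contraTneq hib => wjj; have jb' : j = b by rewrite -wjb wjj.
    by rewrite /hi_swappable -jb' wjj eqxx jJ.
  by move: (outside j wj); rewrite -val_eqE wjb /= in wj *; lia.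
Qed.

Lemma swappable_ends (u v : 'S_n) (x y : 'I_n) :
  S_J J u -> S_J J v -> (u x < v x)%N -> v y = u x -> (u x < u y)%N ->
  lo_swappable u (u x) && hi_swappable u (u y).
Proof.
move=> Ju Jv uvx vyux uxy; apply/andP; split.
  rewrite /lo_swappable (inj_eq (@perm_inj _ u)).
  apply/norP => -[/negPn/eqP ux xJ].
  by have := S_J_geq_notin Jv xJ; move: uvx; rewrite ux; lia.
rewrite /hi_swappable (inj_eq (@perm_inj _ u)).
apply/norP => -[/negPn/eqP uy /negPn yJ]; rewrite uy in yJ.
by have := S_J_leq_in Jv yJ; rewrite vyux; move: uxy; rewrite uy; lia.
Qed.

End Bridge.

Definition tperm_edge n (p q : 'S_n) : Prop :=
  exists i l : 'I_n,
    (val i < val l)%N /\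
    (forall x : 'I_n, q x = tperm i l (p x)) /\
    (forall j : 'I_n, (val i < val j < val l)%N -> p j = j /\ q j = j).

Lemma tperm_edge_sym n (p q : 'S_n) : tperm_edge p q -> tperm_edge q p.
Proof.
case=> i [l [il [qp mid]]]; exists i, l; split=> //.
by split=> [x|j /mid[] //]; rewrite qp tpermK.
Qed.

Lemma tperm_edge_mul_tperm n (w : 'S_n) (a b : 'I_n) :
  (a < b)%N -> fixes_between w a b -> tperm_edge w (w * tperm a b)%g.
Proof.
move=> ab fixw; exists a, b; split=> //.
split=> [x|j jab]; first by rewrite permM.
have wj := fixw j jab; split=> //; rewrite permM wj tpermD //.
  by apply: contraTneq jab => <-; rewrite ltnn.
by apply: contraTneq jab => <-; rewrite ltnn andbF.
Qed.

Lemma fixes_between_chain d (T : porderType d) n (w : 'S_n)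
    (lo hi : pred 'I_n) (f : 'I_n -> T) (G : Prop) :
  (forall v, w v != v -> lo v && hi v) ->
  (forall a b : 'I_n, (a < b)%N -> fixes_between w a b -> lo a -> hi b ->
     (f a < f b)%O \/ G) ->
  forall a b : 'I_n, (a < b)%N -> lo a -> hi b -> (f a < f b)%O \/ G.
Proof.
move=> moved step a b; move: {2}(b - a)%N (leqnn (b - a)%N) => k.
elim: k a b => [|k IHk] a b bak ab loa hib; first by lia.
case: (pickP (fun v : 'I_n => (a < v < b)%N && (w v != v))) => [v|none].
  case/andP=> /andP[av vb] /moved/andP[lov hiv].
  have [fav|] := IHk a v ltac:(lia) av loa hiv; last by right.
  have [fvb|] := IHk v b ltac:(lia) vb lov hib; last by right.
  by left; apply: lt_trans fvb.
apply: step => // v avb; apply/eqP.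
by have := none v; rewrite avb => /negbFE.
Qed.

Lemma perm_neq_exists n (p q : 'S_n) : p != q -> exists x, p x != q x.
Proof.
move=> pq; apply/existsP; apply: contraNT pq => /existsPn eq_pq.
by apply/eqP/permP => x; apply/eqP; have := eq_pq x; rewrite negbK.
Qed.

Lemma perm_neq_witness n (p q : 'S_n) : p != q ->
  exists x y : 'I_n, [/\ (p x < q x)%N, q y = p x & (p x < p y)%N].
Proof.
move=> /perm_neq_exists[x0 pqx0].
have [x pqx minx] :=
  @arg_minnP _ x0 (fun x => p x != q x) (fun x => nat_of_ord (p x)) pqx0.
set y := (q^-1)%g (p x); have qy : q y = p x by rewrite permKV.
have yx : y != x by apply: contra pqx => /eqP yx; rewrite -qy yx.
have pqy : p y != q y by rewrite qy (inj_eq (@perm_inj _ p)).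
have pxq : (p x < q x)%N.
  rewrite ltn_neqAle val_eqE pqx /=; rewrite leqNgt; apply/negP => qpx.
  set k := (p^-1)%g (q x); have pk : p k = q x by rewrite permKV.
  have pqk : p k != q k.
    rewrite pk (inj_eq (@perm_inj _ q)).
    by apply: contra pqx => /eqP xk; rewrite xk pk xk.
  by have := minx k pqk; rewrite pk leqNgt qpx.
exists x, y; split=> //; rewrite ltn_neqAle minx // andbT.
by rewrite val_eqE (inj_eq (@perm_inj _ p)) eq_sym.
Qed.

Lemma tperm_moved n (p q : 'S_n) (i l j : 'I_n) :
  (forall x, q x = tperm i l (p x)) -> p j != q j ->
  (p j = i /\ q j = l) \/ (p j = l /\ q j = i).
Proof. by move=> ->; case: tpermP => [->|->|_ _]; rewrite ?eqxx; auto. Qed.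

Lemma tperm_pointwise_choice n (p q w : 'S_n) (i l : 'I_n) :
  (forall x, q x = tperm i l (p x)) ->
  (forall j, w j = p j \/ w j = q j) -> w = p \/ w = q.
Proof.
move=> qp wpq.
have [-> | /perm_neq_exists[j0 wj0]] := eqVneq w p; [by left | right].
have wqj0 : w j0 = q j0 by case: (wpq j0) => // e; rewrite e eqxx in wj0.
have pqj0 : p j0 != q j0 by rewrite -wqj0 eq_sym.
apply/permP => j; have [wpj | //] := wpq j.
have [pqj | pqj] := eqVneq (p j) (q j); first by rewrite wpj.
have jj0 : j != j0 by apply: contraNneq wj0 => <-; rewrite wpj.
have : p j = p j0 \/ w j = w j0.
  rewrite wpj wqj0.
  by case: (tperm_moved qp pqj) => -[-> _];
     case: (tperm_moved qp pqj0) => -[-> ->]; auto.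
by case=> /perm_inj ejj0; rewrite ejj0 eqxx in jj0.
Qed.

Local Open Scope ring_scope.

Lemma opp_sqr_le_subMsub (R : realFieldType) (a b c : R) :
  - (c - b) ^+ 2 <= (a - b) * (a - c).
Proof.
have sq1 := sqr_ge0 (2 * (a - b) - (c - b)); have sq2 := sqr_ge0 (c - b).
have -> : (a - b) * (a - c) =
  ((2 * (a - b) - (c - b)) ^+ 2 + 3 * (c - b) ^+ 2) / 4 - (c - b) ^+ 2.
  by field.
lra.
Qed.

Lemma subMsub_ge0_outside (R : realFieldType) (a b c : nat) :
  ~~ (minn b c < a < maxn b c)%N -> 0 <= (a%:R - b%:R) * (a%:R - c%:R) :> R.
Proof.
move=> out; have [ab_le | ba_le] := leqP a (minn b c).
  by apply: mulr_le0; rewrite subr_le0 ler_nat; lia.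
have {}out : (maxn b c <= a)%N by move: out; rewrite ba_le /= -leqNgt.
by apply: mulr_ge0; rewrite subr_ge0 ler_nat; lia.
Qed.

Section PermPoint.

Variables (R : realFieldType) (n : nat).
Implicit Types (w : 'S_n) (c : 'I_n -> R).

Lemma perm_point_inj : injective (@perm_point R n).
Proof.
move=> w w' e; apply/permP => j; have /eqP := congr1 (fun f => f j) e.
by rewrite /perm_point eqr_nat eqSS => /eqP /val_inj.
Qed.

Lemma perm_point_sub w w' j j' :
  perm_point R w j - perm_point R w' j' = (w j : nat)%:R - (w' j' : nat)%:R.
Proof. by rewrite /perm_point -!natr1; ring. Qed.

Lemma sum_perm_point_sqr w :
  \sum_j perm_point R w j ^+ 2 = \sum_(j < n) (j.+1)%:R ^+ 2.
Proof. by rewrite /perm_point [RHS](reindex_inj (@perm_inj _ w)). Qed.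

Lemma lin_eval_mul_tperm c w (a b : 'I_n) : a != b ->
  lin_eval c (perm_point R (w * tperm a b)%g) - lin_eval c (perm_point R w)
  = (c ((w^-1)%g a) - c ((w^-1)%g b)) * ((b : nat)%:R - (a : nat)%:R).
Proof.
move=> ab; rewrite /lin_eval /perm_point -sumrB.
have ba : (w^-1)%g b != (w^-1)%g a by rewrite (inj_eq (@perm_inj _ _)) eq_sym.
rewrite (bigD1 ((w^-1)%g a)) //= (bigD1 ((w^-1)%g b)) //= big1 ?addr0.
  by rewrite !permM !permKV tpermL tpermR -!natr1; ring.
move=> j /andP[ja jb]; rewrite permM tpermD ?subrr ?mulr0 //.
  by apply: contra ja => /eqP ->; rewrite permK.
by apply: contra jb => /eqP ->; rewrite permK.
Qed.

Lemma lin_eval_sub_decomp (p q w : 'S_n) (g : 'I_n -> R) (M : R) :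
  let c j := perm_point R p j + perm_point R q j - M * g j in
  lin_eval c (perm_point R p) - lin_eval c (perm_point R w) =
  \sum_j (perm_point R w j - perm_point R p j) *
          (perm_point R w j - perm_point R q j) +
  M * \sum_j g j * (perm_point R w j - perm_point R p j).
Proof.
move=> c; rewrite /lin_eval mulr_sumr -big_split -sumrB /=.
have -> : \sum_j (c j * perm_point R p j - c j * perm_point R w j) =
    \sum_j ((perm_point R w j - perm_point R p j) *
            (perm_point R w j - perm_point R q j) +
          M * (g j * (perm_point R w j - perm_point R p j)) +
          (perm_point R p j ^+ 2 - perm_point R w j ^+ 2)).
  by apply: eq_bigr => j _; rewrite /c; ring.
by rewrite big_split /= sumrB !sum_perm_point_sqr subrr addr0.
Qed.

End PermPoint.

Lemma bridge_edgeE (R : realFieldType) n (J : {set 'I_n}) (p q : 'S_n) :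
  bridge_edge R J p q <->
  [/\ S_J J p, S_J J q, p != q &
   exists c : 'I_n -> R, forall w, S_J J w ->
     lin_eval c (perm_point R w) <= lin_eval c (perm_point R p) /\
     (lin_eval c (perm_point R w) = lin_eval c (perm_point R p) <->
      w = p \/ w = q)].
Proof.
have pt_eq w w' : perm_point R w = perm_point R w' <-> w = w'.
  by split=> [/perm_point_inj|->].
split=> [[Jp Jq pq [c maxc]] | [Jp Jq pq [c maxc]]]; split=> //.
- by apply/eqP => e; rewrite e in pq.
- by exists c => w /maxc[le eqv]; rewrite -!pt_eq.
- by move/perm_point_inj/eqP; rewrite (negbTE pq).
- by exists c => w /maxc[le eqv]; rewrite !pt_eq.
Qed.

Section ExposedEdge.

Variables (R : realFieldType) (n : nat) (J : {set 'I_n}) (c : 'I_n -> R).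
Variables p q : 'S_n.
Hypotheses (Jp : S_J J p) (Jq : S_J J q) (pq : p != q).
Hypothesis c_max : forall w, S_J J w ->
  lin_eval c (perm_point R w) <= lin_eval c (perm_point R p) /\
  (lin_eval c (perm_point R w) = lin_eval c (perm_point R p) <->
   w = p \/ w = q).

Lemma c_lt_or_tperm_edge w (a b : 'I_n) : w = p \/ w = q -> S_J J w ->
  (a < b)%N -> fixes_between w a b ->
  lo_swappable J w a -> hi_swappable J w b ->
  c ((w^-1)%g a) < c ((w^-1)%g b) \/ tperm_edge p q.
Proof.
move=> wpq Jw ab fixw loa hib; set w' := (w * tperm a b)%g.
have Jw' : S_J J w' := S_J_mul_tperm Jw ab fixw loa hib.
have ww' : w' != w.
  apply/eqP => /(congr1 (fun s : 'S_n => val (s ((w^-1)%g a)))).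
  by rewrite /w' permM permKV tpermL => ba; rewrite ba ltnn in ab.
have [w'pq | w'npq] := boolP ((w' == p) || (w' == q)).
  right; have : tperm_edge w w' := tperm_edge_mul_tperm ab fixw.
  clearbody w'; move: ww'; case: wpq => ->; case/orP: w'pq => /eqP -> //.
  - by rewrite eqxx.
  - by move=> _ /tperm_edge_sym.
  - by rewrite eqxx.
left; have [le_w' eq_w'] := c_max Jw'.
have score_w := (c_max Jw).2.2 wpq.
have lt_w' : lin_eval c (perm_point R w') < lin_eval c (perm_point R w).
  rewrite score_w lt_neqAle le_w' andbT; apply/eqP => /eq_w'.
  by case=> /eqP e; move: w'npq; rewrite e ?orbT.
have ab_neq : a != b by rewrite neq_ltn ab.
move: lt_w'; rewrite -subr_lt0 lin_eval_mul_tperm // pmulr_llt0 ?subr_lt0 //.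
by rewrite subr_gt0 ltr_nat.
Qed.

Lemma exposed_tperm_edge : tperm_edge p q.
Proof.
have [x [y [pqx qy pxy]]] := perm_neq_witness pq.
have chain w : w = p \/ w = q -> S_J J w -> forall a b : 'I_n, (a < b)%N ->
    lo_swappable J w a -> hi_swappable J w b ->
    c ((w^-1)%g a) < c ((w^-1)%g b) \/ tperm_edge p q.
  move=> wpq Jw; apply: (fixes_between_chain (f := fun v => c ((w^-1)%g v))).
    by move=> v wv; rewrite /lo_swappable /hi_swappable wv.
  by move=> a b; apply: c_lt_or_tperm_edge.
have /andP[lop hip] := swappable_ends Jp Jq pqx qy pxy.
have qyx : (q y < q x)%N by rewrite qy.
have qyy : (q y < p y)%N by rewrite qy.
have /andP[loq hiq] := swappable_ends Jq Jp qyy (esym qy) qyx.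
have [|//] := chain p (or_introl erefl) Jp _ _ pxy lop hip.
rewrite !permK => cxy.
have [|//] := chain q (or_intror erefl) Jq _ _ qyx loq hiq.
rewrite !permK => cyx.
by have := lt_trans cxy cyx; rewrite ltxx.
Qed.

End ExposedEdge.

Section TpermEdgeExposed.

Variables (R : realFieldType) (n : nat) (J : {set 'I_n}) (p q : 'S_n).
Variables i l : 'I_n.
Hypotheses (Jp : S_J J p) (Jq : S_J J q) (il : (i < l)%N).
Hypothesis qp : forall x, q x = tperm i l (p x).
Hypotheses (fixp : fixes_between p i l) (fixq : fixes_between q i l).

Let pt := perm_point R.

Definition mid_sign (j : 'I_n) : R :=
  if (i < j < l)%N then (if j \in J then 1 else -1) else 0.

Definition dist_pq (w : 'S_n) := \sum_j (pt w j - pt p j) * (pt w j - pt q j).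

Definition mid_drift (w : 'S_n) := \sum_j mid_sign j * (pt w j - pt p j).

Definition drift_weight : R := \sum_j (pt q j - pt p j) ^+ 2 + 1.

Definition edge_functional (j : 'I_n) : R :=
  pt p j + pt q j - drift_weight * mid_sign j.

Lemma mid_drift_term_ge0 w j : S_J J w -> 0 <= mid_sign j * (pt w j - pt p j).
Proof.
move=> Jw; rewrite /mid_sign; case: ifP => jil; last by rewrite mul0r.
rewrite perm_point_sub fixp //; case: ifP => jJ.
  by rewrite mul1r subr_ge0 ler_nat (S_J_leq_in Jw jJ).
by rewrite mulN1r oppr_ge0 subr_le0 ler_nat (S_J_geq_notin Jw (negbT jJ)).
Qed.

Lemma mid_drift_term_ge1 w (j : 'I_n) :
  S_J J w -> (i < j < l)%N -> w j != j -> 1 <= mid_sign j * (pt w j - pt p j).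
Proof.
move=> Jw jil wj; rewrite /mid_sign jil perm_point_sub fixp //.
have wjj : (w j : nat) != j by [].
case: ifP => jJ; rewrite ?mul1r ?mulN1r ?opprB lerBrDl natr1 ler_nat.
  by have := S_J_leq_in Jw jJ; lia.
by have := S_J_geq_notin Jw (negbT jJ); lia.
Qed.

Lemma mid_drift_eq0 w : fixes_between w i l -> mid_drift w = 0.
Proof.
move=> fixw; apply: big1 => j _; rewrite /mid_sign; case: ifP => jil.
  by rewrite perm_point_sub fixw // fixp // subrr mulr0.
by rewrite mul0r.
Qed.

Lemma dist_pq_lb w : 1 - drift_weight <= dist_pq w.
Proof.
rewrite /drift_weight opprD addrCA subrr addr0 -sumrN.
by apply: ler_sum => j _; apply: opp_sqr_le_subMsub.
Qed.

Lemma dist_pq_term_ge0 w j : fixes_between w i l ->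
  0 <= (pt w j - pt p j) * (pt w j - pt q j).
Proof.
move=> fixw; rewrite !perm_point_sub; apply: subMsub_ge0_outside.
have [-> | pqj] := eqVneq (p j) (q j); first by lia.
have out : ~~ (i < w j < l)%N.
  apply/negP => wjil; have wj : w j = j := perm_inj (fixw _ wjil).
  by move: pqj; rewrite wj in wjil; rewrite fixp // fixq // eqxx.
by case: (tperm_moved qp pqj) out => -[-> ->]; lia.
Qed.

Lemma dist_pq_ge0 w : fixes_between w i l -> 0 <= dist_pq w.
Proof. by move=> fixw; apply: sumr_ge0 => j _; apply: dist_pq_term_ge0. Qed.

Lemma dist_pq_eq0 w : fixes_between w i l -> dist_pq w = 0 -> w = p \/ w = q.
Proof.
move=> fixw /psumr_eq0P eq0; apply: (tperm_pointwise_choice qp) => j.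
have /eqP := eq0 (fun k _ => dist_pq_term_ge0 k fixw) j isT.
rewrite mulf_eq0 !perm_point_sub !subr_eq0 !eqr_nat.
by case/orP => /eqP/val_inj; auto.
Qed.

Lemma mid_drift_ge1 w (j : 'I_n) : S_J J w -> (i < j < l)%N -> w j != j ->
  1 <= mid_drift w.
Proof.
move=> Jw jil wj; rewrite /mid_drift (bigD1 j) //= -[1]addr0.
apply: lerD; first exact: mid_drift_term_ge1.
by apply: sumr_ge0 => k _; apply: mid_drift_term_ge0.
Qed.

Lemma drift_weight_ge1 : 1 <= drift_weight.
Proof. by rewrite lerDr; apply: sumr_ge0 => j _; apply: sqr_ge0. Qed.

Let edge_gap w :=
  lin_eval edge_functional (pt p) - lin_eval edge_functional (pt w).

Lemma edge_gapE w : edge_gap w = dist_pq w + drift_weight * mid_drift w.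
Proof. exact: lin_eval_sub_decomp. Qed.

Lemma edge_gap_ge0_eq0 w :
  S_J J w -> 0 <= edge_gap w /\ (edge_gap w = 0 -> w = p \/ w = q).
Proof.
move=> Jw; have [/forallP fixw | /forallPn[j]] :=
  boolP [forall j : 'I_n, (i < j < l)%N ==> (w j == j)].
  have {}fixw : fixes_between w i l by move=> j /(implyP (fixw j))/eqP.
  rewrite edge_gapE mid_drift_eq0 // mulr0 addr0.
  by split; [apply: dist_pq_ge0 | apply: dist_pq_eq0].
rewrite negb_imply => /andP[jil wj].
have drift_ge1 := mid_drift_ge1 Jw jil wj.
have gap_gt0 : 0 < edge_gap w.
  rewrite edge_gapE; have := dist_pq_lb w; have := drift_weight_ge1.
  have : drift_weight <= drift_weight * mid_drift w.
    by rewrite ler_pMr ?(lt_le_trans ltr01 drift_weight_ge1).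
  lra.
by split=> [|gap0]; [apply: ltW | move: gap_gt0; rewrite gap0 ltxx].
Qed.

Lemma edge_gap_q : edge_gap q = 0.
Proof.
rewrite edge_gapE mid_drift_eq0 // mulr0 addr0.
by apply: big1 => j _; rewrite subrr mulr0.
Qed.

Lemma tperm_edge_bridge_edge : bridge_edge R J p q.
Proof.
apply/bridge_edgeE; split=> //.
  apply/eqP => pq; have := qp ((p^-1)%g i); rewrite permKV tpermL -pq permKV.
  by move=> il_eq; move: il; rewrite il_eq ltnn.
exists edge_functional => w Jw; have [ge0 eq0] := edge_gap_ge0_eq0 Jw.
split; first by rewrite -subr_ge0.
split=> [eq_pw | [] ->] //; first by apply: eq0; rewrite /edge_gap eq_pw subrr.
by apply/eqP; rewrite eq_sym -subr_eq0 -/(edge_gap q) edge_gap_q.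
Qed.

End TpermEdgeExposed.

Local Close Scope ring_scope.

Theorem theorem3p4 (R : realFieldType) (n k : nat) (J : {set 'I_n})
    (pi pih : 'S_n) :
  (0 < n)%N -> #|J| = k -> pi \in S_J J -> pih \in S_J J ->
  (bridge_edge R J pi pih <->
   exists i l : 'I_n,
     (val i < val l)%N /\
     (forall x : 'I_n, pih x = tperm i l (pi x)) /\
     (forall j : 'I_n, (val i < val j < val l)%N -> pi j = j /\ pih j = j)).
Proof.
move=> _ _ Jpi Jpih; split.
  by case/bridge_edgeE=> _ _ pq [c c_max]; apply: exposed_tperm_edge c_max.
case=> i [l [il [qp fix_il]]].
by apply: (tperm_edge_bridge_edge R Jpi Jpih il qp) => j /fix_il[].
Qed.
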